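(* Let $B$ be a norming region. For the $B$-biased branching Markov chain, a blue individual located at $x\notin B$ produces $n$ children with probability $d^{\mathrm{s.b.}}_x(n)=n\,d_x(n)/m_x$; conditionally on producing $n$ children, the location of the blue child and the locations of the $n-1$ white children are independent, each white child's location has law $p(x,\cdot)$, and the blue child's location $y$ has law $(p^h_{x,y})_{y\in S}$, where $p^h_{x,y}=\mathbf 1_{B^c}(x)\,q_{x,y}h(y)/h(x)$.
   Context: $S$ countable, $p=(p_{x,y})$ a stochastic matrix on $S$, $(d_x)_{x\in S}$ probability distributions on $\mathbb N_0$, $m_x=\sum_m m\,d_x(m)$, $q_{x,y}=m_xp_{x,y}$, $Q=(q_{x,y})$, Green's function $g(x,y)=\sum_{n\ge0}(Q^n)_{x,y}$, assumed finite. For a branching Markov chain started from one individual at $x$ (each individual at $z$ independently has a $d_z$-distributed number of children at independent $p(z,\cdot)$-distributed locations), $\mathcal H_B$ denotes the set of individuals located in $B$ none of whose strict ancestors is located in $B$. A norming region is a finite $B\subset S$ with $\sum_{y\in B}g(x,y)>0$ for all $x$; $h(x)=\mathbb E^x[\#\mathcal H_B]\in(0,\infty)$. One has $h=Qh$ on $B^c$ and $h=1$ on $B$. The $B$-biased branching Markov chain is a two-type branching Markov chain with types white and blue (state space $S\times\{\mathrm{white},\mathrm{blue}\}$): a white individual, and a blue individual located in $B$, reproduce as in the original chain ($d_x$-distributed number of children at independent $p(x,\cdot)$-locations) and all their children are white. A blue individual at $x\notin B$ produces $n\in\mathbb N$ children with (ordered) locations $y_1,\dots,y_n$ with probability $\frac{1}{h(x)}d_x(n)\prod_{k=1}^np_{x,y_k}\sum_{k=1}^nh(y_k)$;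 given this, the $k$-th child is coloured blue with probability $h(y_k)/\sum_{l=1}^nh(y_l)$ and all other children white. *)

From HB Require Import structures.
From mathcomp Require Import all_boot all_order all_algebra.
From mathcomp Require Import all_classical all_reals all_analysis.
Set Implicit Arguments. Unset Strict Implicit. Unset Printing Implicit Defensive.
Import Order.TTheory GRing.Theory Num.Theory.
Local Open Scope classical_set_scope.
Local Open Scope ring_scope.

Section BMC.
Variables (R : realType) (S : countType).
Variables (p : S -> S -> R) (d : S -> nat -> R) (B : set S).

Definition is_stochastic : Prop :=
  (forall x y, 0 <= p x y) /\ (forall x, \esum_(y in [set: S]) (p x y)%:E = 1%E).

Definition is_offspring_law : Prop :=
  (forall x n, 0 <= d x n) /\ (forall x, \esum_(n in [set: nat]) (d x n)%:E = 1%E).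

Definition mean (x : S) : \bar R := \esum_(n in [set: nat]) (n%:R * d x n)%:E.
Definition meanR (x : S) : R := fine (mean x).

Definition qm (x y : S) : \bar R := (mean x * (p x y)%:E)%E.

Fixpoint Qpow (n : nat) (x y : S) : \bar R :=
  match n with
  | 0 => (if x == y then 1 else 0)%E
  | n.+1 => \esum_(z in [set: S]) (qm x z * Qpow n z y)%E
  end.

Definition green (x y : S) : \bar R := \esum_(n in [set: nat]) Qpow n x y.

Definition green_finite : Prop := forall x y, (green x y < +oo)%E.

Definition norming_region : Prop :=
  finite_set B /\ forall x, (0 < \esum_(y in B) green x y)%E.

(* hitn n x = expected number of individuals of generation n that lie in B
   and have no strict ancestor in B (many-to-one / first-moment formula),
   for the branching Markov chain started with one individual at x. *)
Fixpoint hitn (n : nat) (x : S) : \bar R :=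
  match n with
  | 0 => (if x \in B then 1 else 0)%E
  | n.+1 => (if x \in B then 0 else \esum_(z in [set: S]) (qm x z * hitn n z))%E
  end.

Definition hB (x : S) : \bar R := \esum_(n in [set: nat]) hitn n x.
Definition hR (x : S) : R := fine (hB x).

(* Law of the offspring of a blue individual at x (outside B) in the
   B-biased branching Markov chain: probability that it has n children
   with ordered locations y_1..y_n AND that the k-th child is the blue one. *)
Definition blue_offspring (x : S) (n : nat) (ky : 'I_n * {ffun 'I_n -> S}) : R :=
  let k := ky.1 in let y := ky.2 in
  (hR x)^-1 * d x n * (\prod_(i < n) p x (y i)) * (\sum_(i < n) hR (y i))
  * (hR (y k) / \sum_(i < n) hR (y i)).

Definition dsb (x : S) (n : nat) : R := n%:R * d x n / meanR x.

Definition ph (x y : S) : R :=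
  (if x \in B then 0 else 1) * (meanR x * p x y) * hR y / hR x.

(* Event: n = m.+1 children, the blue child is at z, and the white children,
   listed in their birth order, are at w 0, ..., w (m-1). *)
Definition blue_event (m : nat) (z : S) (w : {ffun 'I_m -> S})
  : set ('I_m.+1 * {ffun 'I_m.+1 -> S}) :=
  [set ky : 'I_m.+1 * {ffun 'I_m.+1 -> S} |
     ky.2 ky.1 = z /\ forall j : 'I_m, ky.2 (lift ky.1 j) = w j].

End BMC.

(* The weight of a blue parent at x with n children, blue child k and locations
   y is h(x)^-1 d_x(n) (prod_i p(x, y_i)) h(y_k): the normalising factor
   sum_i h(y_i) cancels against the colouring probability.  Summing out the
   locations of the white children (p(x, .) is stochastic) leaves
   h(x)^-1 d_x(n) p(x, y_k) h(y_k), and summing over y_k as well gives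
   d_x(n)/m_x, because h = Qh outside B.  Both laws follow by summing over the
   n possible positions of the blue child.  Finiteness and positivity of h come
   from the finiteness of the Green function and the norming property of B. *)
From HB Require Import structures.
From mathcomp Require Import all_boot all_order all_algebra.
From mathcomp Require Import all_classical all_reals all_analysis.
From mathcomp.algebra_tactics Require Import ring.
Import Order.TTheory GRing.Theory Num.Theory.
Local Open Scope classical_set_scope.
Local Open Scope ring_scope.

Section esum_extra.
Variable R : realType.
Local Open Scope ereal_scope.

Lemma esum_ge_term (T : choiceType) (I : set T) (a : T -> \bar R) t :
  I t -> a t <= \esum_(i in I) a i.
Proof.
move=> It; apply: esum_ge; exists [set t]; last by rewrite fsbig_set1.
by split; [exact: finite_set1 | move=> ? ->].
Qed.

Lemma esum_gt0_witness (T : choiceType) (I : set T) (a : T -> \bar R) :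
  (forall i, I i -> 0 <= a i) ->
  0 < \esum_(i in I) a i -> exists2 i, I i & 0 < a i.
Proof.
move=> a0 sum_gt0; apply: contrapT => no_pos.
suff sum0 : \esum_(i in I) a i = 0 by rewrite sum0 ltxx in sum_gt0.
apply: esum1 => i Ii; apply/eqP; apply: contrapT => /negP ai_neq0.
by apply: no_pos; exists i; rewrite // lt_neqAle eq_sym ai_neq0 a0.
Qed.

Lemma esumZl (T : choiceType) (I : set T) (a : T -> \bar R) (c : R) :
  (0 <= c)%R -> (forall i, 0 <= a i) ->
  \esum_(i in I) (c%:E * a i) = c%:E * \esum_(i in I) a i.
Proof.
move=> c0 a0; rewrite /esum -ereal_supZl//; last first.
  by apply/set0P; exists 0; exists set0; [exact: fsets_set0 | rewrite fsbig_set0].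
congr ereal_sup; apply/seteqP; split => y /=.
  by move=> [A fA <-]; exists (\sum_(x \in A) a x); [exists A | rewrite ge0_mule_fsumr].
by move=> [z [A fA <-] <-]; exists A => //; rewrite ge0_mule_fsumr.
Qed.

Lemma esum_finType (T : finType) (a : T -> \bar R) : (forall i, 0 <= a i) ->
  \esum_(i in [set: T]) a i = \sum_(i : T) a i.
Proof.
move=> a0; rewrite esum_fset; [|exact: finite_finset | by []].
rewrite (fsbigE (enum T)) ?enum_uniq//; last by move=> i _; rewrite mem_enum.
by rewrite big_enum_cond /=; apply: eq_bigl => i; rewrite in_setT.
Qed.

Lemma exchange_esum (T1 T2 : choiceType) (I : set T1) (J : set T2)
    (a : T1 -> T2 -> \bar R) : (forall i j, 0 <= a i j) ->
  \esum_(i in I) \esum_(j in J) a i j = \esum_(j in J) \esum_(i in I) a i j.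
Proof.
move=> a0; rewrite (esum_esum (J := fun=> J)) // (esum_esum (J := fun=> I)) //.
rewrite (reindex_esum (I `*`` fun=> J) (J `*`` fun=> I) (fun k => (k.2, k.1)))//.
split.
- by move=> [i j] [/= Ii Jj].
- by move=> [i j] [i' j'] _ _ /= [-> ->].
- by move=> [j i] [/= Jj Ii]; exists (i, j).
Qed.

Lemma esum_ffun_prod (T : choiceType) n (f : 'I_n -> T -> R) :
  (forall i s, 0 <= f i s)%R ->
  (forall i, \esum_(s in [set: T]) (f i s)%:E \is a fin_num) ->
  \esum_(y in [set: {ffun 'I_n -> T}]) (\prod_(i < n) f i (y i))%:E
  = (\prod_(i < n) fine (\esum_(s in [set: T]) (f i s)%:E))%:E.
Proof.
elim: n f => [|n IH] f f0 f_fin.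
  have -> : [set: {ffun 'I_0 -> T}] = [set @ffun0 _ (fun=> T) (card_ord 0)].
    by apply/seteqP; split => y //= _; apply/ffunP => -[].
  by rewrite esum_set1 !big_ord0.
pose cons (sg : T * {ffun 'I_n -> T}) : {ffun 'I_n.+1 -> T} :=
  [ffun i => if unlift ord0 i is Some j then sg.2 j else sg.1].
have cons0 sg : cons sg ord0 = sg.1 by rewrite ffunE unlift_none.
have consS sg j : cons sg (lift ord0 j) = sg.2 j by rewrite ffunE liftK.
rewrite (reindex_esum ([set: T] `*`` fun=> [set: {ffun 'I_n -> T}]) _ cons); last first.
  split=> //.
  - move=> [s g] [s' g'] _ _ eq_cons; have := cons0 (s, g).
    rewrite eq_cons cons0 /= => ->; congr pair; apply/ffunP => j.
    by rewrite -[LHS](consS (s, g)) eq_cons consS.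
  - move=> y _; exists (y ord0, [ffun j => y (lift ord0 j)]) => //.
    by apply/ffunP => i; rewrite ffunE /=; case: unliftP => [j ->|->]; rewrite ?ffunE.
rewrite -(esum_esum (I := [set: T]) (J := fun=> [set: {ffun 'I_n -> T}])
  (a := fun s g => (\prod_(i < n.+1) f i (cons (s, g) i))%:E)); last first.
  by move=> *; rewrite lee_fin prodr_ge0.
rewrite big_ord_recl mulrC EFinM (fineK (f_fin ord0)) -esumZl; last 2 first.
- by apply: prodr_ge0 => i _; apply: fine_ge0; apply: esum_ge0 => s _; rewrite lee_fin.
- by move=> s; rewrite lee_fin.
apply: eq_esum => s _.
under eq_esum do rewrite big_ord_recl cons0 /= EFinM.
rewrite esumZl; last 2 first.
- exact: f0.
- by move=> g; rewrite lee_fin prodr_ge0.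
rewrite muleC; congr (_ * _).
under eq_esum do under eq_bigr do rewrite consS /=.
exact: (IH (fun i => f (lift ord0 i))).
Qed.

Lemma esum_ffun_prod_coord (T : choiceType) n (k : 'I_n) (f g : T -> R) (c : R) :
  (forall s, 0 <= f s)%R -> (forall s, 0 <= g s)%R ->
  \esum_(s in [set: T]) (f s)%:E = 1 ->
  \esum_(s in [set: T]) (f s * g s)%:E = c%:E ->
  \esum_(y in [set: {ffun 'I_n -> T}]) ((\prod_(i < n) f (y i)) * g (y k))%:E
  = c%:E.
Proof.
move=> f0 g0 f1 fgc.
pose fk i s := if i == k then (f s * g s)%R else f s.
have fk0 i s : (0 <= fk i s)%R by rewrite /fk; case: ifP; rewrite ?mulr_ge0.
have esum_fk i : \esum_(s in [set: T]) (fk i s)%:E = (if i == k then c else 1)%:E.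
  by rewrite /fk; case: (i == k).
transitivity (\esum_(y in [set: {ffun 'I_n -> T}]) (\prod_(i < n) fk i (y i))%:E).
  apply: eq_esum => y _; congr EFin.
  rewrite (bigD1 k) //= [RHS](bigD1 k) //= /fk eqxx mulrAC; congr (_ * _)%R.
  by apply: eq_bigr => i /negbTE ->.
rewrite esum_ffun_prod //; last by move=> i; rewrite esum_fk.
congr EFin; under eq_bigr do rewrite esum_fk.
by rewrite (bigD1 k) //= eqxx big1 ?mulr1 // => i /negbTE ->.
Qed.

End esum_extra.
Arguments esum_ge_term {R T I a} t.
Arguments esum_ffun_prod_coord {R T n} k {f g c}.

Section biased_offspring.
Variables (R : realType) (S : countType) (p : S -> S -> R) (d : S -> nat -> R)
  (B : set S).
Hypotheses (p_stochastic : is_stochastic p) (d_law : is_offspring_law d)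
  (green_fin : green_finite p d) (B_norming : norming_region p d B).
Local Open Scope ereal_scope.

Lemma p_ge0 x y : (0 <= p x y)%R. Proof. by case: p_stochastic. Qed.
Lemma d_ge0 x n : (0 <= d x n)%R. Proof. by case: d_law. Qed.

Lemma mean_ge0 x : 0 <= mean d x.
Proof. by apply: esum_ge0 => n _; rewrite lee_fin mulr_ge0 ?d_ge0. Qed.

Lemma qm_ge0 x y : 0 <= qm p d x y.
Proof. by rewrite mule_ge0 ?mean_ge0 // lee_fin p_ge0. Qed.

Lemma Qpow_ge0 n x y : 0 <= Qpow p d n x y.
Proof.
elim: n x y => [|n IH] x y /=; first by case: ifP.
by apply: esum_ge0 => z _; rewrite mule_ge0 ?qm_ge0.
Qed.

Lemma hitn_ge0 n x : 0 <= hitn p d B n x.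
Proof.
elim: n x => [|n IH] x /=; first by case: ifP.
by case: ifP => // _; apply: esum_ge0 => z _; rewrite mule_ge0 ?qm_ge0.
Qed.

Lemma hB_ge0 x : 0 <= hB p d B x.
Proof. by apply: esum_ge0 => n _; exact: hitn_ge0. Qed.

(* An infinite mean would make g(x, y) infinite for any y with p(x, y) > 0. *)
Lemma mean_lty x : mean d x < +oo.
Proof.
have [y _ pxy] : exists2 y, [set: S] y & 0 < (p x y)%:E.
  apply: esum_gt0_witness; first by move=> y _; rewrite lee_fin p_ge0.
  by case: p_stochastic => _ ->.
rewrite ltey; apply/negP => /eqP mean_oo.
have := green_fin x y; rewrite ltey => /negP; apply.
rewrite -leye_eq; apply: le_trans (esum_ge_term (I := [set: nat]) 1%N _) => //=.
apply: le_trans (esum_ge_term (I := [set: S]) y _) => //.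
by rewrite eqxx mule1 /qm mean_oo gt0_mulye.
Qed.

Lemma meanE x : mean d x = (meanR d x)%:E.
Proof. by rewrite fineK // ge0_fin_numE ?mean_ge0 ?mean_lty. Qed.

Lemma meanR_ge0 x : (0 <= meanR d x)%R.
Proof. by rewrite -lee_fin -meanE mean_ge0. Qed.

Lemma qmE x y : qm p d x y = (meanR d x * p x y)%:E.
Proof. by rewrite /qm meanE EFinM. Qed.

Lemma esum_qmZl x z (T : choiceType) (I : set T) (a : T -> \bar R) :
  (forall i, 0 <= a i) ->
  \esum_(i in I) (qm p d x z * a i) = qm p d x z * \esum_(i in I) a i.
Proof. by move=> a0; rewrite qmE esumZl ?mulr_ge0 ?meanR_ge0 ?p_ge0. Qed.

Lemma hitn_le_esum_Qpow n x : hitn p d B n x <= \esum_(y in B) Qpow p d n x y.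
Proof.
elim: n x => [|n IH] x /=.
  case: ifPn => xB; last by apply: esum_ge0 => y _; case: ifP.
  by apply: le_trans (esum_ge_term x (set_mem xB)); rewrite eqxx.
case: ifPn => xB.
  by apply: esum_ge0 => y _; apply: esum_ge0 => z _; rewrite mule_ge0 ?qm_ge0 ?Qpow_ge0.
apply: (@le_trans _ _ (\esum_(z in [set: S]) (qm p d x z * \esum_(y in B) Qpow p d n z y))).
  by apply: le_esum => z _; rewrite lee_wpmul2l ?qm_ge0.
rewrite (eq_esum (b := fun z => \esum_(y in B) (qm p d x z * Qpow p d n z y))).
  by rewrite exchange_esum // => *; rewrite mule_ge0 ?qm_ge0 ?Qpow_ge0.
by move=> z _; rewrite esum_qmZl // => y; exact: Qpow_ge0.
Qed.

Lemma hB_lty x : hB p d B x < +oo.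
Proof.
apply: (@le_lt_trans _ _ (\esum_(y in B) green p d x y)).
  apply: (@le_trans _ _ (\esum_(n in [set: nat]) \esum_(y in B) Qpow p d n x y)).
    by apply: le_esum => n _; exact: hitn_le_esum_Qpow.
  by rewrite exchange_esum // => *; exact: Qpow_ge0.
case: B_norming => finB _.
rewrite esum_fset // => [|y _]; last by apply: esum_ge0 => *; exact: Qpow_ge0.
by rewrite fsbig_finite //; apply: lte_sum_pinfty => y _; exact: green_fin.
Qed.

Lemma hBE x : hB p d B x = (hR p d B x)%:E.
Proof. by rewrite fineK // ge0_fin_numE ?hB_ge0 ?hB_lty. Qed.

Lemma hR_ge0 x : (0 <= hR p d B x)%R.
Proof. by rewrite -lee_fin -hBE hB_ge0. Qed.

(* The generations n >= 1 of H_B all descend from a child of the root. *)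
Lemma hB_rec x : x \notin B ->
  hB p d B x = \esum_(z in [set: S]) (qm p d x z * hB p d B z).
Proof.
move=> xB; rewrite /hB (esumID [set 0%N]) => [|*]; last exact: hitn_ge0.
rewrite setTI esum_set1 ?hitn_ge0 //= (negbTE xB) add0e setTI.
rewrite (reindex_esum [set: nat] _ succn); last first.
  split=> // [n n' _ _ /succn_inj //|n /= n0].
  by exists n.-1 => //; rewrite prednK // lt0n; apply/eqP.
under eq_esum do rewrite /= (negbTE xB).
rewrite exchange_esum => [|*]; last by rewrite mule_ge0 ?qm_ge0 ?hitn_ge0.
by apply: eq_esum => z _; rewrite esum_qmZl // => *; exact: hitn_ge0.
Qed.

Lemma hB_gt0_of_Qpow n x y : y \in B -> 0 < Qpow p d n x y -> 0 < hB p d B x.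
Proof.
have hB_gt0_in x' : x' \in B -> 0 < hB p d B x'.
  by move=> x'B; apply: lt_le_trans (esum_ge_term (I := [set: nat]) 0%N _) => //=; rewrite x'B.
move=> yB; elim: n x => [|n IH] x /=.
  by case: eqP => [->|]; [move=> _; exact: hB_gt0_in | rewrite ltxx].
case/esum_gt0_witness => [z _|z _]; first by rewrite mule_ge0 ?qm_ge0 ?Qpow_ge0.
rewrite mule_ge0_gt0 ?qm_ge0 ?Qpow_ge0 // => /andP[qxz /IH hz].
have [xB|xB] := boolP (x \in B); first exact: hB_gt0_in.
by rewrite hB_rec //; apply: lt_le_trans (esum_ge_term z _) => //; exact: mule_gt0.
Qed.

Lemma hR_gt0 x : (0 < hR p d B x)%R.
Proof.
rewrite -lte_fin -hBE; case: B_norming => _ /(_ x).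
case/esum_gt0_witness => [y _|y By]; first by apply: esum_ge0 => *; exact: Qpow_ge0.
case/esum_gt0_witness => [n _|n _]; first exact: Qpow_ge0.
exact: hB_gt0_of_Qpow (mem_set By).
Qed.

Lemma hR_harmonic x : x \notin B ->
  (hR p d B x)%:E = (meanR d x)%:E * \esum_(z in [set: S]) (p x z * hR p d B z)%:E.
Proof.
move=> xB; rewrite -hBE hB_rec // -esumZl ?meanR_ge0 // => [|z]; last first.
  by rewrite lee_fin mulr_ge0 ?p_ge0 ?hR_ge0.
by apply: eq_esum => z _; rewrite qmE hBE -!EFinM mulrA.
Qed.

Lemma meanR_gt0 x : x \notin B -> (0 < meanR d x)%R.
Proof.
move=> xB; rewrite lt_neqAle meanR_ge0 andbT eq_sym; apply/eqP => m0.
by have := hR_gt0 x; rewrite -lte_fin hR_harmonic // m0 mul0e ltxx.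
Qed.

Lemma esum_p_hR x : x \notin B ->
  \esum_(z in [set: S]) (p x z * hR p d B z)%:E = (hR p d B x / meanR d x)%:E.
Proof.
move=> xB; have := hR_harmonic x xB; have m_gt0 := meanR_gt0 x xB.
have : 0 <= \esum_(z in [set: S]) (p x z * hR p d B z)%:E.
  by apply: esum_ge0 => z _; rewrite lee_fin mulr_ge0 ?p_ge0 ?hR_ge0.
case: (\esum_(z in [set: S]) _) => [r _ | _ | //].
  by rewrite -EFinM => -[->]; congr EFin; field; rewrite gt_eqF.
by rewrite gt0_muley ?lte_fin.
Qed.

Local Close Scope ereal_scope.

(* When sum_i h(y_i) = 0 the division is junk, but then h(y_k) = 0 as well. *)
Lemma blue_offspringE x n (k : 'I_n) (y : {ffun 'I_n -> S}) :
  blue_offspring p d B x (k, y) =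
  (hR p d B x)^-1 * d x n * ((\prod_(i < n) p x (y i)) * hR p d B (y k)).
Proof.
rewrite /blue_offspring /=; set hsum := \sum_(i < n) _.
have [hsum0|hsum_neq0] := eqVneq hsum 0; last first.
  by rewrite -[in LHS]mulrA (mulrC hsum) divfK // mulrA.
have -> : hR p d B (y k) = 0.
  by apply: (psumr_eq0P (P := predT) (F := fun i => hR p d B (y i))) => // i _; exact: hR_ge0.
by rewrite hsum0 !(mulr0, mul0r).
Qed.

Lemma blue_offspring_ge0 x n (ky : 'I_n * {ffun 'I_n -> S}) :
  0 <= blue_offspring p d B x ky.
Proof.
case: ky => k y; rewrite blue_offspringE.
by rewrite !mulr_ge0 ?invr_ge0 ?prodr_ge0 ?hR_ge0 ?d_ge0 // => i _; exact: p_ge0.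
Qed.

Lemma esum_blue_offspring_blue_child x n (k : 'I_n) : x \notin B ->
  \esum_(y in [set: {ffun 'I_n -> S}]) (blue_offspring p d B x (k, y))%:E
  = (d x n / meanR d x)%:E.
Proof.
move=> xB; have hx_gt0 := hR_gt0 x.
under eq_esum do rewrite blue_offspringE EFinM.
rewrite esumZl ?mulr_ge0 ?invr_ge0 ?d_ge0 ?(ltW hx_gt0) //; last first.
  by move=> y; rewrite lee_fin mulr_ge0 ?hR_ge0 ?prodr_ge0 // => i _; exact: p_ge0.
have p_sum1 : \esum_(z in [set: S]) (p x z)%:E = 1%E by case: p_stochastic.
rewrite (esum_ffun_prod_coord k (p_ge0 x) hR_ge0 p_sum1 (esum_p_hR x xB)).
by rewrite -EFinM; congr EFin; field; rewrite !gt_eqF ?meanR_gt0.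
Qed.

Lemma blue_offspring_size_law x n : x \notin B ->
  \esum_(ky in [set: 'I_n * {ffun 'I_n -> S}]) (blue_offspring p d B x ky)%:E
  = (dsb d x n)%:E.
Proof.
move=> xB; transitivity (\esum_(k in [set: 'I_n])
    \esum_(y in [set: {ffun 'I_n -> S}]) (blue_offspring p d B x (k, y))%:E).
  rewrite esum_esum => [|*]; last by rewrite lee_fin blue_offspring_ge0.
  have -> : [set: 'I_n] `*`` (fun=> [set: {ffun 'I_n -> S}])
      = [set: 'I_n * {ffun 'I_n -> S}] by apply/seteqP; split.
  by apply: eq_esum => -[k y].
under eq_esum do rewrite esum_blue_offspring_blue_child //.
rewrite esum_finType => [|k]; last by rewrite lee_fin mulr_ge0 ?invr_ge0 ?d_ge0 ?meanR_ge0.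
by rewrite sumEFin sumr_const card_ord /dsb mulr_natl mulrnAl.
Qed.

Lemma blue_offspring_joint_law x m (z : S) (w : {ffun 'I_m -> S}) : x \notin B ->
  \esum_(ky in blue_event z w) (blue_offspring p d B x ky)%:E
  = (dsb d x m.+1 * ph p d B x z * \prod_(j < m) p x (w j))%:E.
Proof.
move=> xB.
pose Y (k : 'I_m.+1) : {ffun 'I_m.+1 -> S} :=
  [ffun i => if unlift k i is Some j then w j else z].
have Yk k : Y k k = z by rewrite ffunE unlift_none.
have Yl k j : Y k (lift k j) = w j by rewrite ffunE liftK.
rewrite (reindex_esum [set: 'I_m.+1] _ (fun k => (k, Y k))); last first.
  split=> [k _ | k k' _ _ [] // | [k y] [/= yk yl]]; first by split=> //=.
  exists k => //; congr pair; apply/ffunP => i.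
  by rewrite ffunE; case: unliftP => [j ->|->].
rewrite esum_finType => [|k]; last by rewrite lee_fin blue_offspring_ge0.
have blue_offspringY k : blue_offspring p d B x (k, Y k)
    = (hR p d B x)^-1 * d x m.+1 * (p x z * \prod_(j < m) p x (w j) * hR p d B z).
  rewrite blue_offspringE (bigD1_ord k) //= Yk; congr (_ * (_ * _ * _)).
  by apply: eq_bigr => j _; rewrite Yl.
under eq_bigr do rewrite blue_offspringY.
rewrite sumEFin sumr_const card_ord /dsb /ph (negbTE xB); congr EFin.
by rewrite -mulr_natl; field; rewrite !gt_eqF ?meanR_gt0 ?hR_gt0.
Qed.

End biased_offspring.

Theorem mainTheorem2 (R : realType) (S : countType)
  (p : S -> S -> R) (d : S -> nat -> R) (B : set S) :
  is_stochastic p ->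
  is_offspring_law d ->
  green_finite p d ->
  norming_region p d B ->
  forall x : S, x \notin B ->
    (* number of children of a blue individual at x has law d^{s.b.}_x *)
    (forall n : nat,
       \esum_(ky in [set: 'I_n * {ffun 'I_n -> S}])
          (blue_offspring p d B x ky)%:E = (dsb d x n)%:E)
    /\
    (* joint law of (number of children, blue child's location,
       white children's locations) factorizes *)
    (forall (m : nat) (z : S) (w : {ffun 'I_m -> S}),
       \esum_(ky in blue_event z w) (blue_offspring p d B x ky)%:E
       = (dsb d x m.+1 * ph p d B x z * \prod_(j < m) p x (w j))%:E).
Proof.
move=> p_stochastic d_law green_fin B_norming x xB; split.
- by move=> n; exact: blue_offspring_size_law.
- by move=> m z w; exact: blue_offspring_joint_law.
Qed.
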